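(* Let $\big(m_{i,j}^{s,t}\big)_{i,j,s,t\ge 0}$ and $\big(\phi_i^{s,t}\big)_{i,s,t\ge0}$ be real numbers with $m_{i,j}^{s,t}=m_{j,i}^{s,t}$ for all $i,j,s,t$, satisfying $$m_{i,j}^{s+1,t}=m_{i+1,j+1}^{s,t},\qquad m_{i,j}^{s,t+1}=m_{i,j}^{s,t}-\phi_i^{s,t}\phi_j^{s,t},\qquad \phi_i^{s+1,t}=\phi_{i+1}^{s,t}$$ for all $i,j,s,t\ge 0$. Put $\tau_n^{s,t}=\det\big(m_{i,j}^{s,t}\big)_{i,j=0}^{n-1}$ for $n\ge1$ and $\tau_0^{s,t}=1$. Then for all $n\ge 1$ and $s,t\ge 0$, $$ \begin{aligned} &4\left(\tau_{n}^{s+1,t}\tau_n^{s,t}-\tau_{n+1}^{s,t}\tau_{n-1}^{s+1,t}\right)\left(\tau_n^{s+1,t+1}\tau_n^{s,t+1}-\tau_{n+1}^{s,t+1}\tau_{n-1}^{s+1,t+1}\right)\\ &\qquad=\left(\tau_n^{s+1,t}\tau_n^{s,t+1}+\tau_n^{s+1,t+1}\tau_n^{s,t}-\tau_{n+1}^{s,t+1}\tau_{n-1}^{s+1,t}-\tau_{n+1}^{s,t}\tau_{n-1}^{s+1,t+1}\right)^2. \end{aligned} $$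
   Context: The displayed quartic equation is the discrete CKP equation. The empty determinant $\tau_0^{s,t}$ equals $1$. *)

From mathcomp Require Import all_boot all_order all_algebra.
From mathcomp Require Import reals.
Set Implicit Arguments. Unset Strict Implicit. Unset Printing Implicit Defensive.
Import GRing.Theory Num.Theory.
Local Open Scope ring_scope.

(* tau m n s t = det (m i j s t)_{i,j=0}^{n-1}; for n = 0 this is the
   determinant of the empty 0x0 matrix, which is 1 in MathComp. *)
Definition tau (R : realType) (m : nat -> nat -> nat -> nat -> R)
  (n s t : nat) : R :=
  \det (\matrix_(i < n, j < n) m i j s t).

From mathcomp Require Import all_boot all_order all_algebra.
From mathcomp Require Import reals.
From mathcomp Require Import fingroup perm fraction mxpoly ring.
Set Implicit Arguments. Unset Strict Implicit. Unset Printing Implicit Defensive.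
Import GRing.Theory Num.Theory.
Local Open Scope ring_scope.

(* Write a = m^{s,t} and p = phi^{s,t}.  All eight determinants are principal
   minors of the symmetric bordered matrix [[1, p^T], [p, a]]: the s-shift drops
   the index 0 of a, and the t-shift a - p p^T is the Schur complement of the
   corner 1.  They all contain the core block a_{1..n-1}; when it is invertible,
   taking Schur complements with respect to it turns each of them into
   det(core) times a principal minor of one symmetric 3x3 matrix (indexed by the
   border, the index 0 and the index n of a), where the identity is a
   polynomial identity in six entries.  Invertibility of the core is removed by
   adding an indeterminate X to its diagonal and evaluating at X = 0. *)

Lemma det_mxsub_perm (R : comNzRingType) n (s : 'S_n) (A : 'M[R]_n) :
  \det (mxsub s s A) = \det A.
Proof.
have -> : mxsub s s A = row_perm s (col_perm s A) by apply/matrixP => i j; rewrite !mxE.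
rewrite row_permE col_permE !det_mulmx !det_perm odd_permV.
by rewrite mulrCA -expr2 sqrr_sign mulr1.
Qed.

Lemma det_block_mx_schur (R : comUnitRingType) p q (D : 'M[R]_p) (C : 'M_(p, q))
    (B : 'M_(q, p)) (A : 'M_q) :
  A \in unitmx -> \det (block_mx D C B A) = \det A * \det (D - C *m invmx A *m B).
Proof.
move=> A_unit.
have -> : block_mx D C B A =
    block_mx 1%:M (C *m invmx A) 0 1%:M *m block_mx (D - C *m invmx A *m B) 0 B A.
  rewrite mulmx_block !mul1mx !mul0mx ?mulmx0 ?add0r ?addr0 -[C *m invmx A *m A]mulmxA mulVmx //.
  by rewrite mulmx1 subrK.
by rewrite (@det_mulmx _ (p + q)) det_ublock det_lblock !det1 !mul1r mulrC.
Qed.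

Section PrincipalMinors.
Variable R : comNzRingType.
Implicit Types (f g : nat -> nat -> R) (s : seq nat).

Definition pminor f s : R :=
  \det (\matrix_(i < size s, j < size s) f (nth 0%N s i) (nth 0%N s j)).

Lemma pminorE N f s : size s = N ->
  pminor f s = \det (\matrix_(i < N, j < N) f (nth 0%N s i) (nth 0%N s j)).
Proof. by move=> <-. Qed.

Lemma eq_pminor f g s : (forall x y, f x y = g x y) -> pminor f s = pminor g s.
Proof. by move=> eq_fg; congr (\det _); apply/matrixP => i j; rewrite !mxE. Qed.

Lemma pminor_iota f m N :
  pminor f (iota m N) = \det (\matrix_(i < N, j < N) f (m + i)%N (m + j)%N).
Proof.
by rewrite (pminorE _ (size_iota m N)); congr (\det _); apply/matrixP => i j;
  rewrite !mxE !nth_iota.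
Qed.

Lemma pminor_map (h : nat -> nat) f s :
  pminor f (map h s) = pminor (fun x y => f (h x) (h y)) s.
Proof.
rewrite (pminorE _ (size_map h s)); congr (\det _); apply/matrixP => i j.
by rewrite !mxE !(nth_map 0%N).
Qed.

Lemma pminor_perm f s1 s2 : perm_eq s1 s2 -> pminor f s1 = pminor f s2.
Proof.
move=> /[dup] /perm_size size_s1 /(perm_iotaP 0%N) [I perm_I def_s1].
have size_I : size I = size s2 by rewrite (perm_size perm_I) size_iota.
have I_lt (i : 'I_(size s2)) : (nth 0%N I i < size s2)%N.
  have : nth 0%N I i \in iota 0 (size s2) by rewrite -(perm_mem perm_I) mem_nth ?size_I.
  by rewrite mem_iota.
have I_inj : injective (fun i => Ordinal (I_lt i)).
  move=> i j [] /eqP; rewrite nth_uniq ?size_I // => [/eqP/val_inj //|].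
  by rewrite (perm_uniq perm_I) iota_uniq.
rewrite (pminorE _ size_s1) -[pminor f s2](det_mxsub_perm (perm I_inj)).
by congr (\det _); apply/matrixP => i j; rewrite !mxE !permE /= def_s1 !(nth_map 0%N) ?size_I.
Qed.

End PrincipalMinors.

Lemma rmorph_pminor (R S : comNzRingType) (h : {rmorphism R -> S}) (f : nat -> nat -> R) s :
  h (pminor f s) = pminor (fun x y => h (f x y)) s.
Proof. by rewrite -det_map_mx; congr (\det _); apply/matrixP => i j; rewrite !mxE. Qed.

Section Bordering.
Variable R : comNzRingType.
Implicit Types (a : nat -> nat -> R) (p : nat -> R).

Definition rank1_sub a p (i j : nat) : R := a i j - p i * p j.

Definition border a p (i j : nat) : R :=
  match i, j with
  | 0%N, 0%N => 1
  | 0%N, j.+1 => p j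
  | i.+1, 0%N => p i
  | i.+1, j.+1 => a i j
  end.

Lemma border_sym a p : (forall i j, a i j = a j i) ->
  forall i j, border a p i j = border a p j i.
Proof. by move=> asym [|i] [|j] //=. Qed.

End Bordering.

Lemma pminor_border (R : comUnitRingType) (a : nat -> nat -> R) (p : nat -> R) s :
  pminor (border a p) (0%N :: map succn s) = pminor (rank1_sub a p) s.
Proof.
have size_s : size (rcons (map succn s) 0%N) = (size s + 1)%N.
  by rewrite size_rcons size_map addn1.
rewrite -(pminor_perm _ (permEl (perm_rcons 0%N _))) (pminorE _ size_s).
have -> : \matrix_(i, j < size s + 1) border a p (nth 0%N (rcons (map succn s) 0%N) i)
                                             (nth 0%N (rcons (map succn s) 0%N) j) =
    block_mx (\matrix_(i, j < size s) a (nth 0%N s i) (nth 0%N s j))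
             (\col_(i < size s) p (nth 0%N s i)) (\row_(j < size s) p (nth 0%N s j)) 1%:M.
  apply/matrixP => i j; rewrite -(splitK i) -(splitK j).
  case: (split i) => i'; case: (split j) => j';
    rewrite ?block_mxEul ?block_mxEur ?block_mxEdl ?block_mxEdr !mxE /= !nth_rcons
            size_map ?ord1 ?addn0 ?ltnn ?eqxx ?ltn_ord /= ?(nth_map 0%N) //.
rewrite (@det_block_mx_schur _ (size s) 1) ?unitmx1 // det1 mul1r invmx1 mulmx1.
by congr (\det _); apply/matrixP => i j; rewrite !mxE big_ord1 !mxE.
Qed.

Section SchurComplement.
Variables (R : comUnitRingType) (k : nat) (f : nat -> nat -> R) (c : seq nat).

Definition core_mx : 'M[R]_k := \matrix_(i, j < k) f (nth 0%N c i) (nth 0%N c j).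

Definition schur (x y : nat) : R :=
  f x y - (\row_(i < k) f x (nth 0%N c i) *m invmx core_mx
           *m \col_(j < k) f (nth 0%N c j) y) 0 0.

Lemma schur_sym : (forall x y, f x y = f y x) -> forall x y, schur x y = schur y x.
Proof.
move=> fsym x y; rewrite /schur fsym; congr (_ - _).
have core_sym : core_mx^T = core_mx by apply/matrixP => i j; rewrite !mxE fsym.
have tr11 (M : 'M[R]_1) : M 0 0 = M^T 0 0 by rewrite mxE.
rewrite tr11 !trmx_mul trmx_inv core_sym mulmxA.
by congr ((_ *m _ *m _) _ _); apply/matrixP => i j; rewrite !mxE fsym.
Qed.

Hypothesis size_c : size c = k.

Lemma pminor_schur e : core_mx \in unitmx ->
  pminor f (e ++ c) = \det core_mx * pminor schur e.
Proof.
move=> core_unit.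
have size_ec : size (e ++ c) = (size e + k)%N by rewrite size_cat size_c.
rewrite (pminorE _ size_ec).
have -> : \matrix_(i, j < size e + k) f (nth 0%N (e ++ c) i) (nth 0%N (e ++ c) j) =
    block_mx (\matrix_(i, j < size e) f (nth 0%N e i) (nth 0%N e j))
             (\matrix_(i < size e, j < k) f (nth 0%N e i) (nth 0%N c j))
             (\matrix_(i < k, j < size e) f (nth 0%N c i) (nth 0%N e j)) core_mx.
  apply/matrixP => i j; rewrite -(splitK i) -(splitK j).
  case: (split i) => i'; case: (split j) => j';
    rewrite ?block_mxEul ?block_mxEur ?block_mxEdl ?block_mxEdr !mxE /= !nth_cat
            ?ltn_ord ?(ltnNge, leq_addr) /= ?addKn //.
rewrite det_block_mx_schur //; congr (_ * \det _); apply/matrixP => i j.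
rewrite /schur !mxE; congr (_ - _); apply: eq_bigr => l _; rewrite !mxE; congr (_ * _).
by apply: eq_bigr => l' _; rewrite !mxE.
Qed.

End SchurComplement.

(* With n = k.+1, (t0, t1, t2, t3) stands for (tau_n, tau_n^{s+1}, tau_{n+1},
   tau_{n-1}^{s+1}) at time t and (u0, u1, u2, u3) for the same at time t+1. *)
Definition ckp_defect (R : comNzRingType) (t0 t1 t2 t3 u0 u1 u2 u3 : R) : R :=
  4 * (t1 * t0 - t2 * t3) * (u1 * u0 - u2 * u3)
  - (t1 * u0 + u1 * t0 - u2 * t3 - t2 * u3) ^+ 2.

Lemma ckp_defect_pminor (R : comNzRingType) (S : nat -> nat -> R) (d : R) (x y z : nat) :
  (forall i j, S i j = S j i) ->
  ckp_defect (d * pminor S [:: y]) (d * pminor S [:: z]) (d * pminor S [:: y; z])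
             (d * pminor S [::]) (d * pminor S [:: x; y]) (d * pminor S [:: x; z])
             (d * pminor S [:: x; y; z]) (d * pminor S [:: x]) = 0.
Proof.
move=> Ssym; rewrite /ckp_defect /pminor /=.
rewrite !(expand_det_row _ 0) !big_ord_recl !big_ord0 /cofactor !mxE /=.
rewrite !(expand_det_row _ 0) !big_ord_recl !big_ord0 /cofactor !mxE /=.
rewrite !det_mx11 !mxE /= !det_mx00 /bump /= (Ssym y x) (Ssym z x) (Ssym z y).
ring.
Qed.

Lemma perm_iota_last m n : perm_eq (iota m n.+1) ((m + n)%N :: iota m n).
Proof. by rewrite -addn1 iotaD perm_catC. Qed.

Definition ckp_residual (R : comNzRingType) (a : nat -> nat -> R) (p : nat -> R) (k : nat) : R :=
  ckp_defect
    (pminor a (iota 0 k.+1)) (pminor a (iota 1 k.+1))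
    (pminor a (iota 0 k.+2)) (pminor a (iota 1 k))
    (pminor (rank1_sub a p) (iota 0 k.+1)) (pminor (rank1_sub a p) (iota 1 k.+1))
    (pminor (rank1_sub a p) (iota 0 k.+2)) (pminor (rank1_sub a p) (iota 1 k)).

Lemma ckp_residual_rmorph (R S : comNzRingType) (h : {rmorphism R -> S})
    (a : nat -> nat -> R) (p : nat -> R) (a' : nat -> nat -> S) (p' : nat -> S) k :
  (forall i j, h (a i j) = a' i j) -> (forall i, h (p i) = p' i) ->
  h (ckp_residual a p k) = ckp_residual a' p' k.
Proof.
move=> ha hp.
have ea s : pminor (fun x y => h (a x y)) s = pminor a' s by apply: eq_pminor.
have eb s : pminor (fun x y => h (rank1_sub a p x y)) s = pminor (rank1_sub a' p') s.
  by apply: eq_pminor => x y; rewrite rmorphB rmorphM ha !hp.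
rewrite /ckp_residual /ckp_defect.
rewrite rmorphB rmorphXn !rmorphM rmorph_nat !(rmorphB, rmorphD, rmorphM).
by rewrite !rmorph_pminor !ea !eb.
Qed.

Lemma ckp_residual_eq0_unit (R : comUnitRingType) (a : nat -> nat -> R) (p : nat -> R) k :
  (forall i j, a i j = a j i) -> \matrix_(i, j < k) a i.+1 j.+1 \in unitmx ->
  ckp_residual a p k = 0.
Proof.
(* Index 0 of f is the border and index i.+1 is index i of a; the core is
   iota 2 k, and the three outer indices are 0, 1 and 2 + k. *)
move=> asym A_unit; set f := border a p; set c := iota 2 k.
have core_A : core_mx k f c = \matrix_(i, j < k) a i.+1 j.+1.
  by apply/matrixP => i j; rewrite !mxE !nth_iota.
have minor_schur e s : perm_eq s (e ++ c) ->
    pminor f s = \det (core_mx k f c) * pminor (schur k f c) e.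
  by move/(pminor_perm f) ->; rewrite (pminor_schur (size_iota 2 k)) ?core_A.
have pminor_a m N : pminor a (iota m N) = pminor f (iota m.+1 N).
  by rewrite (iotaDl 1) pminor_map.
have pminor_b m N : pminor (rank1_sub a p) (iota m N) = pminor f (0%N :: iota m.+1 N).
  by rewrite -pminor_border (iotaDl 1).
rewrite /ckp_residual !pminor_a !pminor_b.
rewrite -[RHS](ckp_defect_pminor (\det (core_mx k f c)) 0 1 (2 + k)
                 (schur_sym k c (border_sym p asym))).
by congr ckp_defect; apply: minor_schur; rewrite /= ?perm_cons ?perm_iota_last.
Qed.

Lemma ckp_residual_eq0 (F : idomainType) (a : nat -> nat -> F) (p : nat -> F) k :
  (forall i j, a i j = a j i) -> ckp_residual a p k = 0.
Proof.
move=> asym.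
pose aX i j : {poly F} := (a i j)%:P + 'X *+ [&& i == j, 0 < i & i <= k]%N.
pose pX i : {poly F} := (p i)%:P.
have aX_sym i j : aX i j = aX j i.
  by rewrite /aX asym; case: eqVneq => [->|].
have core_char : \matrix_(i, j < k) tofrac (aX i.+1 j.+1) =
    map_mx (@tofrac _) (char_poly_mx (- \matrix_(i, j < k) a i.+1 j.+1)).
  apply/matrixP => i j; rewrite !mxE /aX eqSS ltn_ord andbT polyCN opprK addrC.
  by rewrite ltn0Sn andbT.
have residual_X : ckp_residual aX pX k = 0.
  apply/eqP; rewrite -tofrac_eq0 (@ckp_residual_rmorph _ _ (@tofrac _) _ _
    (fun i j => tofrac (aX i j)) (fun i => tofrac (pX i))) //.
  apply/eqP/ckp_residual_eq0_unit => [i j | ]; first by rewrite aX_sym.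
  rewrite core_char unitmxE det_map_mx unitfE tofrac_eq0.
  exact/monic_neq0/char_poly_monic.
have := congr1 (horner_eval 0) residual_X.
rewrite rmorph0 (@ckp_residual_rmorph _ _ (horner_eval 0) _ _ a p) // => [i j | i].
  by rewrite -[LHS]/((aX i j).[0]) hornerD hornerC hornerMn hornerX mul0rn addr0.
by rewrite -[LHS]/((pX i).[0]) hornerC.
Qed.

Theorem corollary3p5 (R : realType)
  (m : nat -> nat -> nat -> nat -> R) (phi : nat -> nat -> nat -> R)
  (msym : forall i j s t, m i j s t = m j i s t)
  (hs : forall i j s t, m i j s.+1 t = m i.+1 j.+1 s t)
  (ht : forall i j s t, m i j s t.+1 = m i j s t - phi i s t * phi j s t)
  (hphi : forall i s t, phi i s.+1 t = phi i.+1 s t)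
  (n s t : nat) : (1 <= n)%N ->
  4 * (tau m n s.+1 t * tau m n s t - tau m n.+1 s t * tau m n.-1 s.+1 t)
    * (tau m n s.+1 t.+1 * tau m n s t.+1
       - tau m n.+1 s t.+1 * tau m n.-1 s.+1 t.+1)
  = (tau m n s.+1 t * tau m n s t.+1 + tau m n s.+1 t.+1 * tau m n s t
     - tau m n.+1 s t.+1 * tau m n.-1 s.+1 t
     - tau m n.+1 s t * tau m n.-1 s.+1 t.+1) ^+ 2.
Proof.
case: n => [// | k] _.
pose a i j := m i j s t; pose b := rank1_sub a (fun i => phi i s t).
have tau_a N : tau m N s t = pminor a (iota 0 N).
  by rewrite pminor_iota; congr (\det _); apply/matrixP => i j; rewrite !mxE.
have tau_as N : tau m N s.+1 t = pminor a (iota 1 N).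
  by rewrite pminor_iota; congr (\det _); apply/matrixP => i j; rewrite !mxE hs.
have tau_b N : tau m N s t.+1 = pminor b (iota 0 N).
  by rewrite pminor_iota; congr (\det _); apply/matrixP => i j; rewrite !mxE ht.
have tau_bs N : tau m N s.+1 t.+1 = pminor b (iota 1 N).
  by rewrite pminor_iota; congr (\det _); apply/matrixP => i j; rewrite !mxE ht hs !hphi.
rewrite !tau_a !tau_as !tau_b !tau_bs; apply/eqP; rewrite -subr_eq0; apply/eqP.
exact: ckp_residual_eq0 (fun i j => msym i j s t).
Qed.
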